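(* Let $X$ be a normed space and let $Y$ be a topological vector space ordered by a closed convex pointed cone $K$. Let $\alpha:\mathbb{R}_+\to\mathbb{R}_+$ be nondecreasing with $\lim_{t\to0^+}\alpha(t)/t=0$. Let $A\subset X$ be convex, $k_0\in K\setminus\{0\}$, and let $F:X\to Y$ be strongly $\alpha(\cdot)$-$k_0$ paraconvex on $A$ with constant $C\ge0$. Let $x_0\in A$ and $h\in X$ with $\|h\|=1$ be such that there is $\delta_0>0$ with $x_0+th\in A$ for all $t\in(-\delta_0,\delta_0)$. Define, for $0<t<\delta_0$, $$\phi(t):=\frac{F(x_0+th)-F(x_0)}{t}+C\,\frac{\alpha(t)}{t}\,k_0.$$ Then there exist $b\in Y$ and $\delta>0$ such that $\phi(t)-b\in K$ for all $0<t<\delta$.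
   Context: A cone $K$ is pointed if $K\cap(-K)=\{0\}$. For a convex cone $K\subset Y$, write $x\le_K y$ iff $y-x\in K$. A mapping $F:X\to Y$ is strongly $\alpha(\cdot)$-$k_0$ paraconvex on a convex set $A\subset X$ with constant $C\ge0$ (where $k_0\in K$) if for all $x_1,x_2\in A$ and all $\lambda\in[0,1]$, $$F(\lambda x_1+(1-\lambda)x_2)\le_K \lambda F(x_1)+(1-\lambda)F(x_2)+C\min\{\lambda,1-\lambda\}\,\alpha(\|x_1-x_2\|)\,k_0.$$ *)

From Stdlib Require Import Reals.
Open Scope R_scope.

Record RVS := {
  vcar :> Type;
  vadd : vcar -> vcar -> vcar;
  vzero : vcar;
  vopp : vcar -> vcar;
  vscal : R -> vcar -> vcar;
  vadd_assoc : forall x y z, vadd x (vadd y z) = vadd (vadd x y) z;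
  vadd_comm : forall x y, vadd x y = vadd y x;
  vadd_0 : forall x, vadd x vzero = x;
  vadd_opp : forall x, vadd x (vopp x) = vzero;
  vscal_assoc : forall a b x, vscal a (vscal b x) = vscal (a * b) x;
  vscal_1 : forall x, vscal 1 x = x;
  vscal_distr_v : forall a x y, vscal a (vadd x y) = vadd (vscal a x) (vscal a y);
  vscal_distr_s : forall a b x, vscal (a + b) x = vadd (vscal a x) (vscal b x)
}.

Arguments vadd {_}. Arguments vzero {_}. Arguments vopp {_}. Arguments vscal {_}.

Definition vsub {V : RVS} (x y : V) : V := vadd x (vopp y).

Record NormedSpace := {
  ns_vs :> RVS;
  norm : ns_vs -> R;
  norm_nonneg : forall x, 0 <= norm x;
  norm_eq0 : forall x, norm x = 0 -> x = vzero;
  norm_triangle : forall x y, norm (vadd x y) <= norm x + norm y;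
  norm_homog : forall a x, norm (vscal a x) = Rabs a * norm x
}.
Arguments norm {_}.

Record TVS := {
  tvs_vs :> RVS;
  is_open : (tvs_vs -> Prop) -> Prop;
  open_full : is_open (fun _ => True);
  open_empty : is_open (fun _ => False);
  open_inter : forall U W, is_open U -> is_open W -> is_open (fun x => U x /\ W x);
  open_union : forall (I : Type) (U : I -> tvs_vs -> Prop),
      (forall i, is_open (U i)) -> is_open (fun x => exists i, U i x);
  add_continuous : forall U x y, is_open U -> U (vadd x y) ->
      exists V W, is_open V /\ is_open W /\ V x /\ W y /\
        (forall x' y', V x' -> W y' -> U (vadd x' y'));
  scal_continuous : forall U a x, is_open U -> U (vscal a x) ->
      exists d V, 0 < d /\ is_open V /\ V x /\
        (forall b x', Rabs (b - a) < d -> V x' -> U (vscal b x'))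
}.
Arguments is_open {_}.

Definition is_closed {Y : TVS} (K : Y -> Prop) : Prop :=
  is_open (fun y => ~ K y).

Definition is_cone {Y : RVS} (K : Y -> Prop) : Prop :=
  forall (l : R) (y : Y), 0 <= l -> K y -> K (vscal l y).

Definition is_convex {Y : RVS} (A : Y -> Prop) : Prop :=
  forall (x1 x2 : Y) (l : R), A x1 -> A x2 -> 0 <= l <= 1 ->
    A (vadd (vscal l x1) (vscal (1 - l) x2)).

Definition is_convex_cone {Y : RVS} (K : Y -> Prop) : Prop :=
  is_cone K /\ is_convex K.

Definition is_pointed {Y : RVS} (K : Y -> Prop) : Prop :=
  forall y : Y, (K y /\ K (vopp y)) <-> y = vzero.

Definition leK {Y : RVS} (K : Y -> Prop) (x y : Y) : Prop := K (vsub y x).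

Definition strongly_paraconvex {X : NormedSpace} {Y : RVS} (K : Y -> Prop)
    (alpha : R -> R) (k0 : Y) (F : X -> Y) (A : X -> Prop) (C : R) : Prop :=
  forall (x1 x2 : X) (l : R), A x1 -> A x2 -> 0 <= l <= 1 ->
    leK K (F (vadd (vscal l x1) (vscal (1 - l) x2)))
          (vadd (vadd (vscal l (F x1)) (vscal (1 - l) (F x2)))
                (vscal (C * Rmin l (1 - l) * alpha (norm (vsub x1 x2))) k0)).

(* Fix s := delta0 / 2.  For 0 < t < s the point x0 is the convex combination
   s/(t+s) (x0 + t h) + t/(t+s) (x0 - s h), so paraconvexity yields the
   three-point slope inequality
     (F x0 - F (x0 - s h)) / s  <=_K  (F (x0 + t h) - F x0) / t
                                      + C alpha(t+s) / s k0.
   Since alpha(t+s) <= alpha(2s) and C alpha(t)/t >= 0, the backward quotient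
   at s minus C alpha(2s)/s k0 is a lower bound b of phi on (0, s). *)
From Stdlib Require Import Reals Lra.
Open Scope R_scope.

Section LinearCombinations.
Variable V : RVS.

Lemma vadd_0l (x : V) : vadd vzero x = x.
Proof. rewrite vadd_comm; apply vadd_0. Qed.

Lemma vscal_0 (x : V) : vscal 0 x = vzero.
Proof.
  set (y := vscal 0 x).
  assert (Hyy : vadd y y = y).
  { unfold y; rewrite <- vscal_distr_s; f_equal; ring. }
  transitivity (vadd (vadd y y) (vopp y)).
  - rewrite <- vadd_assoc, vadd_opp, vadd_0. reflexivity.
  - rewrite Hyy. apply vadd_opp.
Qed.

Lemma vopp_unique (x y : V) : vadd x y = vzero -> vopp x = y.
Proof.
  intro H. rewrite <- (vadd_0 V (vopp x)), <- H, vadd_assoc.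
  rewrite (vadd_comm V (vopp x) x), vadd_opp. apply vadd_0l.
Qed.

Lemma vadd_ACA (a b c d : V) :
  vadd (vadd a b) (vadd c d) = vadd (vadd a c) (vadd b d).
Proof.
  rewrite <- !vadd_assoc. f_equal. rewrite !vadd_assoc. f_equal. apply vadd_comm.
Qed.

Definition lincomb4 (u1 u2 u3 u4 : V) (a b c d : R) : V :=
  vadd (vadd (vscal a u1) (vscal b u2)) (vadd (vscal c u3) (vscal d u4)).

Lemma lincomb4_add u1 u2 u3 u4 a b c d a' b' c' d' :
  vadd (lincomb4 u1 u2 u3 u4 a b c d) (lincomb4 u1 u2 u3 u4 a' b' c' d')
  = lincomb4 u1 u2 u3 u4 (a + a') (b + b') (c + c') (d + d').
Proof.
  unfold lincomb4.
  rewrite vadd_ACA, (vadd_ACA (vscal a u1)), (vadd_ACA (vscal c u3)).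
  rewrite !vscal_distr_s. reflexivity.
Qed.

Lemma lincomb4_scal u1 u2 u3 u4 r a b c d :
  vscal r (lincomb4 u1 u2 u3 u4 a b c d)
  = lincomb4 u1 u2 u3 u4 (r * a) (r * b) (r * c) (r * d).
Proof. unfold lincomb4. rewrite !vscal_distr_v, !vscal_assoc. reflexivity. Qed.

Lemma lincomb4_0 u1 u2 u3 u4 : vzero = lincomb4 u1 u2 u3 u4 0 0 0 0.
Proof. unfold lincomb4. rewrite !vscal_0, !vadd_0. reflexivity. Qed.

Lemma lincomb4_opp u1 u2 u3 u4 a b c d :
  vopp (lincomb4 u1 u2 u3 u4 a b c d)
  = lincomb4 u1 u2 u3 u4 (- a) (- b) (- c) (- d).
Proof.
  apply vopp_unique. rewrite lincomb4_add, (lincomb4_0 u1 u2 u3 u4).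
  f_equal; ring.
Qed.

Inductive vterm : Type :=
  | Atom1 | Atom2 | Atom3 | Atom4 | Zero
  | Add (e f : vterm) | Sub (e f : vterm) | Opp (e : vterm) | Scal (r : R) (e : vterm).

Fixpoint vterm_eval (u1 u2 u3 u4 : V) (e : vterm) : V :=
  match e with
  | Atom1 => u1 | Atom2 => u2 | Atom3 => u3 | Atom4 => u4 | Zero => vzero
  | Add e f => vadd (vterm_eval u1 u2 u3 u4 e) (vterm_eval u1 u2 u3 u4 f)
  | Sub e f => vsub (vterm_eval u1 u2 u3 u4 e) (vterm_eval u1 u2 u3 u4 f)
  | Opp e => vopp (vterm_eval u1 u2 u3 u4 e)
  | Scal r e => vscal r (vterm_eval u1 u2 u3 u4 e)
  end.

Fixpoint vterm_coef (i : nat) (e : vterm) : R :=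
  match e with
  | Atom1 => match i with 1%nat => 1 | _ => 0 end
  | Atom2 => match i with 2%nat => 1 | _ => 0 end
  | Atom3 => match i with 3%nat => 1 | _ => 0 end
  | Atom4 => match i with 4%nat => 1 | _ => 0 end
  | Zero => 0
  | Add e f => vterm_coef i e + vterm_coef i f
  | Sub e f => vterm_coef i e + - vterm_coef i f
  | Opp e => - vterm_coef i e
  | Scal r e => r * vterm_coef i e
  end.

Lemma vterm_eval_lincomb4 u1 u2 u3 u4 e :
  vterm_eval u1 u2 u3 u4 e
  = lincomb4 u1 u2 u3 u4
      (vterm_coef 1 e) (vterm_coef 2 e) (vterm_coef 3 e) (vterm_coef 4 e).
Proof.
  induction e; simpl; unfold vsub.
  1-4: unfold lincomb4; rewrite !vscal_0, vscal_1, !vadd_0, ?vadd_0l; reflexivity.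
  - apply lincomb4_0.
  - rewrite IHe1, IHe2, lincomb4_add. reflexivity.
  - rewrite IHe1, IHe2, lincomb4_opp, lincomb4_add. reflexivity.
  - rewrite IHe, lincomb4_opp. reflexivity.
  - rewrite IHe, lincomb4_scal. reflexivity.
Qed.

End LinearCombinations.

Ltac reify_vterm u1 u2 u3 u4 t :=
  lazymatch t with
  | vadd ?a ?b => let ra := reify_vterm u1 u2 u3 u4 a in
                  let rb := reify_vterm u1 u2 u3 u4 b in constr:(Add ra rb)
  | vsub ?a ?b => let ra := reify_vterm u1 u2 u3 u4 a in
                  let rb := reify_vterm u1 u2 u3 u4 b in constr:(Sub ra rb)
  | vopp ?a => let ra := reify_vterm u1 u2 u3 u4 a in constr:(Opp ra)
  | vscal ?r ?a => let ra := reify_vterm u1 u2 u3 u4 a in constr:(Scal r ra)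
  | vzero => constr:(Zero)
  | u1 => constr:(Atom1)
  | u2 => constr:(Atom2)
  | u3 => constr:(Atom3)
  | u4 => constr:(Atom4)
  end.

(* Reduces an equation between linear expressions in the atoms u1..u4 to the
   four real equations between their coefficients. *)
Ltac vlinear u1 u2 u3 u4 :=
  match goal with |- ?l = ?r =>
    let el := reify_vterm u1 u2 u3 u4 l in
    let er := reify_vterm u1 u2 u3 u4 r in
    change (vterm_eval _ u1 u2 u3 u4 el = vterm_eval _ u1 u2 u3 u4 er);
    rewrite !vterm_eval_lincomb4; cbn [vterm_coef]; unfold lincomb4;
    f_equal; f_equal; f_equal
  end.

Lemma convex_cone_comb (Y : RVS) (K : Y -> Prop) (a b : R) (x y : Y) :
  is_convex_cone K -> K x -> K y -> 0 <= a -> 0 <= b ->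
  K (vadd (vscal a x) (vscal b y)).
Proof.
  intros [Hcone Hconv] Hx Hy Ha Hb.
  replace (vadd (vscal a x) (vscal b y))
    with (vscal 2 (vadd (vscal (/ 2) (vscal a x)) (vscal (1 - / 2) (vscal b y)))).
  - apply Hcone; [lra|]. apply Hconv; [apply Hcone; auto.. | lra].
  - vlinear x y x y; field.
Qed.

Lemma paraconvex_slope_le (X : NormedSpace) (Y : RVS) (K : Y -> Prop)
    (alpha : R -> R) (k0 : Y) (F : X -> Y) (A : X -> Prop) (C : R)
    (x0 h : X) (s t : R) :
  is_convex_cone K -> K k0 -> 0 <= C -> (forall r, 0 <= r -> 0 <= alpha r) ->
  strongly_paraconvex K alpha k0 F A C -> 0 < s -> 0 < t ->
  A (vadd x0 (vscal t h)) -> A (vadd x0 (vscal (- s) h)) ->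
  leK K (vscal (/ s) (vsub (F x0) (F (vadd x0 (vscal (- s) h)))))
        (vadd (vscal (/ t) (vsub (F (vadd x0 (vscal t h))) (F x0)))
              (vscal (C * alpha ((t + s) * norm h) / s) k0)).
Proof.
  intros HK Hk0 HC Halpha HF Hs Ht Ax1 Ax2.
  set (x1 := vadd x0 (vscal t h)) in *.
  set (x2 := vadd x0 (vscal (- s) h)) in *.
  set (l := s / (t + s)).
  assert (Hl : 1 - l = t / (t + s)) by (unfold l; field; lra).
  assert (Hl0 : 0 < l) by (apply Rdiv_lt_0_compat; lra).
  assert (Hl1 : 0 < 1 - l) by (rewrite Hl; apply Rdiv_lt_0_compat; lra).
  assert (Hx0 : vadd (vscal l x1) (vscal (1 - l) x2) = x0).
  { unfold x1, x2. vlinear x0 h x0 h; unfold l; field; lra. }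
  assert (Hdist : norm (vsub x1 x2) = (t + s) * norm h).
  { replace (vsub x1 x2) with (vscal (t + s) h).
    - rewrite norm_homog, Rabs_right; lra.
    - unfold x1, x2. vlinear x0 h x0 h; ring. }
  assert (Hpc := HF x1 x2 l Ax1 Ax2 ltac:(lra)).
  rewrite Hx0, Hdist in Hpc. unfold leK in Hpc |- *.
  set (m := Rmin l (1 - l)) in Hpc.
  set (a := alpha ((t + s) * norm h)) in *.
  assert (Ha : 0 <= a) by (apply Halpha, Rmult_le_pos; [lra | apply norm_nonneg]).
  assert (Hm : m <= 1 - l) by apply Rmin_r.
  (* Scaling by (t+s)/(st) turns the weights l, 1-l into 1/t, 1/s; the
     remaining slack comes from Rmin l (1-l) <= 1-l. *)
  set (k := (t + s) / (s * t)).
  assert (Hk : 0 < k) by (apply Rdiv_lt_0_compat; nra).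
  set (slack := C * a * k * (1 - l - m)).
  assert (Hslack : 0 <= slack).
  { apply Rmult_le_pos; [apply Rmult_le_pos; [apply Rmult_le_pos|]|]; lra. }
  match type of Hpc with K ?P =>
    assert (HK' := convex_cone_comb Y K k slack P k0 HK Hpc Hk0 ltac:(lra) Hslack)
  end.
  match goal with |- K ?G => replace G with (vadd (vscal k (vsub
    (vadd (vadd (vscal l (F x1)) (vscal (1 - l) (F x2))) (vscal (C * m * a) k0))
    (F x0))) (vscal slack k0)) end; [exact HK'|].
  vlinear (F x1) (F x2) (F x0) k0; unfold slack, k, l; field; lra.
Qed.

Theorem proposition3p2
  (X : NormedSpace) (Y : TVS) (K : Y -> Prop)
  (HKclosed : is_closed K) (HKconv : is_convex_cone K) (HKpointed : is_pointed K)
  (alpha : R -> R)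
  (Halpha_nonneg : forall t, 0 <= t -> 0 <= alpha t)
  (Halpha_mono : forall s t, 0 <= s -> s <= t -> alpha s <= alpha t)
  (Halpha_lim : forall eps, 0 < eps -> exists d, 0 < d /\
       forall t, 0 < t < d -> Rabs (alpha t / t) < eps)
  (A : X -> Prop) (HA : is_convex A)
  (k0 : Y) (Hk0 : K k0) (Hk0nz : k0 <> vzero)
  (F : X -> Y) (C : R) (HC : 0 <= C)
  (HF : strongly_paraconvex K alpha k0 F A C)
  (x0 h : X) (Hx0 : A x0) (Hh : norm h = 1)
  (delta0 : R) (Hdelta0 : 0 < delta0)
  (Hline : forall t, - delta0 < t < delta0 -> A (vadd x0 (vscal t h))) :
  let phi := fun t : R =>
    vadd (vscal (/ t) (vsub (F (vadd x0 (vscal t h))) (F x0)))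
         (vscal (C * (alpha t / t)) k0) in
  exists (b : Y) (delta : R), 0 < delta /\
    forall t, 0 < t < delta -> K (vsub (phi t) b).
Proof.
  intros phi.
  set (s := delta0 / 2).
  exists (vsub (vscal (/ s) (vsub (F x0) (F (vadd x0 (vscal (- s) h)))))
               (vscal (C * alpha (2 * s) / s) k0)), s.
  split; [unfold s; lra|]. intros t [Ht Hts].
  assert (Hslope := paraconvex_slope_le X Y K alpha k0 F A C x0 h s t HKconv Hk0
    HC Halpha_nonneg HF ltac:(unfold s; lra) Ht
    ltac:(apply Hline; unfold s in *; lra) ltac:(apply Hline; unfold s; lra)).
  rewrite Hh, Rmult_1_r in Hslope. unfold leK in Hslope.
  set (gap := C * (alpha t / t) + C * (alpha (2 * s) - alpha (t + s)) / s).
  assert (Hgap : 0 <= gap).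
  { assert (0 <= alpha t / t)
      by (apply Rle_mult_inv_pos; [apply Halpha_nonneg|]; lra).
    assert (alpha (t + s) <= alpha (2 * s)) by (apply Halpha_mono; lra).
    apply Rplus_le_le_0_compat; [apply Rmult_le_pos; lra|].
    apply Rle_mult_inv_pos; [apply Rmult_le_pos|unfold s]; lra. }
  assert (HK := convex_cone_comb Y K 1 gap _ k0 HKconv Hslope Hk0 ltac:(lra) Hgap).
  match goal with |- K ?G => replace G with (vadd (vscal 1 (vsub
    (vadd (vscal (/ t) (vsub (F (vadd x0 (vscal t h))) (F x0)))
          (vscal (C * alpha (t + s) / s) k0))
    (vscal (/ s) (vsub (F x0) (F (vadd x0 (vscal (- s) h))))))) (vscal gap k0))
  end; [exact HK|].
  unfold phi, gap.
  vlinear (F (vadd x0 (vscal t h))) (F (vadd x0 (vscal (- s) h))) (F x0) k0;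
    field; unfold s in *; lra.
Qed.
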